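(* Let $A=A_s+A_d\epsilon\in\mathbb{D}^{m\times n}$. Then the DMPGI of the essential part $A_e$ exists and $$A^G=A_e^D.$$ In particular, if all nonzero singular values of $A$ are appreciable, then the DMPGI $A^D$ exists and $A^D=A^G$; otherwise $A^D$ does not exist and $A^G$ is the DMPGI of $A_e$.
   Context: A dual real number is $a=a_s+a_d\epsilon$ with $a_s,a_d\in\mathbb R$, $\epsilon\neq0$, $\epsilon^2=0$; appreciable if $a_s\neq0$, infinitesimal otherwise; ordered by $a>b$ iff $a_s>b_s$, or $a_s=b_s$ and $a_d>b_d$. A dual real matrix is $A=A_s+A_d\epsilon$ with real $A_s,A_d$; $A^\top=A_s^\top+A_d^\top\epsilon$; orthogonal means $U^\top U=UU^\top=I$. Every $A\in\mathbb{D}^{m\times n}$ has an SVD $A=U\Sigma V^\top$ with $U,V$ orthogonal dual real matrices and $\Sigma$ diagonal with entries $\mu_1\ge\dots\ge\mu_r$ positive appreciable, $\mu_{r+1}\ge\dots\ge\mu_t$ positive infinitesimal, and zeros (unique). The essential part is $A_e=U\begin{bmatrix}\mathrm{diag}(\mu_1,\dots,\mu_r)&O\\O&O\end{bmatrix}V^\top$. The GMPI $A^G$ is the unique $X$ with $AXA=A_e$, $XAX=X$, $(AX)^\top=AX$, $(XA)^\top=XA$. The DMPGI $A^D$ of a dual real matrix $B$ is a matrix $X$ satisfying $BXB=B$, $XBX=X$, $(BX)^\top=BX$, $(XB)^\top=XB$ (when it exists). *)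

From HB Require Import structures.
From mathcomp Require Import all_boot all_order all_algebra.
From mathcomp Require Import reals.
Set Implicit Arguments. Unset Strict Implicit. Unset Printing Implicit Defensive.
Import Order.TTheory GRing.Theory Num.Theory.
Local Open Scope ring_scope.

Section Dual.
Variable R : realType.

(* dual real number a = ds + dd eps *)
Record dual := Dual { ds : R; dd : R }.

Definition dle (a b : dual) : Prop :=
  ds a < ds b \/ (ds a = ds b /\ dd a <= dd b).

Definition dzero : dual := Dual 0 0.
Definition pos_appreciable (a : dual) : Prop := 0 < ds a.
Definition pos_infinitesimal (a : dual) : Prop := ds a = 0 /\ 0 < dd a.

(* dual real matrix A = A_s + A_d eps *)
Record dmx (m n : nat) := DMx { mxs : 'M[R]_(m, n); mxd : 'M[R]_(m, n) }.

Definition dmul m n p (A : dmx m n) (B : dmx n p) : dmx m p :=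
  DMx (mxs A *m mxs B) (mxs A *m mxd B + mxd A *m mxs B).

Definition dtr m n (A : dmx m n) : dmx n m := DMx (mxs A)^T (mxd A)^T.

Definition did n : dmx n n := DMx 1%:M 0.

Definition dorthogonal n (U : dmx n n) : Prop :=
  dmul (dtr U) U = did n /\ dmul U (dtr U) = did n.

Definition ddiag m n (mu : nat -> dual) : dmx m n :=
  DMx (\matrix_(i < m, j < n) if (i : nat) == j then ds (mu i) else 0)
      (\matrix_(i < m, j < n) if (i : nat) == j then dd (mu i) else 0).

(* A = U Sigma V^T is an SVD of A, where Sigma = diag(mu_0,...,mu_{min(m,n)-1}),
   mu_0 >= ... >= mu_{r-1} positive appreciable, mu_r >= ... >= mu_{t-1}
   positive infinitesimal, and the remaining diagonal entries are zero
   (indices are 0-based). *)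
Definition is_dsvd m n (A : dmx m n) (U : dmx m m) (mu : nat -> dual)
    (r t : nat) (V : dmx n n) : Prop :=
  [/\ dorthogonal U, dorthogonal V,
      (r <= t)%N /\ (t <= minn m n)%N,
      [/\ (forall i, (i < r)%N -> pos_appreciable (mu i)),
          (forall i, (r <= i)%N -> (i < t)%N -> pos_infinitesimal (mu i)),
          (forall i, (t <= i)%N -> (i < minn m n)%N -> mu i = dzero)
        & (forall i j, (i <= j)%N -> (j < t)%N -> dle (mu j) (mu i))]
    & A = dmul (dmul U (ddiag m n mu)) (dtr V)].

Definition ess_part m n (U : dmx m m) (mu : nat -> dual) (r : nat)
    (V : dmx n n) : dmx m n :=
  dmul (dmul U (ddiag m n (fun i => if (i < r)%N then mu i else dzero)))
       (dtr V).

Definition is_GMPI m n (A : dmx m n) (Ae : dmx m n) (X : dmx n m) : Prop :=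
  [/\ dmul (dmul A X) A = Ae, dmul (dmul X A) X = X,
      dtr (dmul A X) = dmul A X & dtr (dmul X A) = dmul X A].

Definition is_DMPGI m n (B : dmx m n) (X : dmx n m) : Prop :=
  [/\ dmul (dmul B X) B = B, dmul (dmul X B) X = X,
      dtr (dmul B X) = dmul B X & dtr (dmul X B) = dmul X B].

End Dual.

From HB Require Import structures.
From mathcomp Require Import all_boot all_order all_algebra.
From mathcomp Require Import reals.
From mathcomp Require Import ring.
Set Implicit Arguments. Unset Strict Implicit. Unset Printing Implicit Defensive.
Import Order.TTheory GRing.Theory Num.Theory.
Local Open Scope ring_scope.

(* Diagonal dual matrices multiply entrywise.
   2. Two Penrose-type facts valid for arbitrary A, A_e:
      - any X with the GMPI equations is a DMPGI of A_e;
      - conversely, if A A_e^T = A_e A_e^T and A_e^T A = A_e^T A_e, any DMPGI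
        of A_e satisfies the GMPI equations.
   3. From an SVD A = U Sigma V^T: the two cross identities of 2 hold,
      V Sigma_e^+ U^T (entrywise dual inverse on the appreciable part) is a
      DMPGI of A_e, A = A_e when t = r, and when t > r the positive
      infinitesimal singular value mu_r forbids any solution of A Y A = A:
      the eps-part of the (r,r) entry of Sigma Z Sigma vanishes for every Z. *)

Section DualMatrixAlgebra.
Variable R : realType.

Lemma dmulA m n p q (A : dmx R m n) (B : dmx R n p) (C : dmx R p q) :
  dmul (dmul A B) C = dmul A (dmul B C).
Proof.
case: A => As Ad; case: B => Bs Bd; case: C => Cs Cd; rewrite /dmul /=.
by congr DMx; rewrite ?mulmxA // !mulmxDl !mulmxDr !mulmxA addrA.
Qed.

Lemma dtr_mul m n p (A : dmx R m n) (B : dmx R n p) :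
  dtr (dmul A B) = dmul (dtr B) (dtr A).
Proof.
case: A => As Ad; case: B => Bs Bd; rewrite /dmul /dtr /=.
by congr DMx; rewrite ?trmx_mul // linearD /= !trmx_mul addrC.
Qed.

Lemma dtrK m n (A : dmx R m n) : dtr (dtr A) = A.
Proof. by case: A => As Ad; rewrite /dtr /= !trmxK. Qed.

Lemma dmul1l m n (A : dmx R m n) : dmul (did R m) A = A.
Proof. by case: A => As Ad; rewrite /dmul /did /= !mul1mx mul0mx addr0. Qed.

Lemma dmul1r m n (A : dmx R m n) : dmul A (did R n) = A.
Proof. by case: A => As Ad; rewrite /dmul /did /= !mulmx1 mulmx0 add0r. Qed.

Lemma orthKl n p (U : dmx R n n) (X : dmx R n p) :
  dorthogonal U -> dmul (dtr U) (dmul U X) = X.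
Proof. by case=> UtU _; rewrite -dmulA UtU dmul1l. Qed.

End DualMatrixAlgebra.

Section DiagonalMatrices.
Variable R : realType.

Definition rdiag m n (f : nat -> R) : 'M[R]_(m, n) :=
  \matrix_(i < m, j < n) if (i : nat) == j then f i else 0.

Lemma ddiagE m n (mu : nat -> dual R) :
  ddiag m n mu = DMx (rdiag m n (fun i => ds (mu i))) (rdiag m n (fun i => dd (mu i))).
Proof. by []. Qed.

Lemma rdiag_mul m n p (f g : nat -> R) :
  rdiag m n f *m rdiag n p g =
  rdiag m p (fun i => if (i < n)%N then f i * g i else 0).
Proof.
apply/matrixP => i k; rewrite !mxE.
have entry (j : 'I_n) : (rdiag m n f i j * rdiag n p g j k) =
    if (i : nat) == j then (if (j : nat) == k then f i * g i else 0) else 0.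
  rewrite !mxE; case: eqP => [->|]; last by rewrite mul0r.
  by case: eqP; rewrite ?mulr0.
case: (ltnP i n) => [lt_in | le_ni].
  rewrite (bigD1 (Ordinal lt_in)) //= big1 => [|j neq_ji]; last first.
    by rewrite entry; case: eqP => // eq_ij; case/eqP: neq_ji; apply: val_inj.
  by rewrite entry eqxx addr0.
rewrite big1 => [|j _]; first by case: eqP.
by rewrite entry; case: eqP => // eq_ij; move: (ltn_ord j); rewrite -eq_ij ltnNge le_ni.
Qed.

Lemma rdiag_tr m n f : (rdiag m n f)^T = rdiag n m f.
Proof.
by apply/matrixP => i j; rewrite !mxE eq_sym; case: eqP => // ->.
Qed.

Lemma rdiag_add m n f g :
  rdiag m n f + rdiag m n g = rdiag m n (fun i => f i + g i).
Proof. by apply/matrixP => i j; rewrite !mxE; case: eqP; rewrite ?addr0. Qed.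

Lemma rdiag_eq m n f g : (forall i, (i < minn m n)%N -> f i = g i) ->
  rdiag m n f = rdiag m n g.
Proof.
move=> efg; apply/matrixP => i j; rewrite !mxE; case: eqP => // eq_ij.
by rewrite efg // leq_min ltn_ord /= eq_ij ltn_ord.
Qed.

Lemma rdiag_mul_row0 m n p (f : nat -> R) (M : 'M[R]_(n, p)) (i : 'I_m) j :
  f i = 0 -> (rdiag m n f *m M) i j = 0.
Proof.
move=> fi0; rewrite mxE big1 // => k _; rewrite mxE.
by case: eqP => _; rewrite ?fi0 mul0r.
Qed.

Lemma rdiag_mul_col0 m n p (f : nat -> R) (M : 'M[R]_(p, m)) i (j : 'I_n) :
  f j = 0 -> (M *m rdiag m n f) i j = 0.
Proof.
move=> fj0; rewrite mxE big1 // => k _; rewrite mxE.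
by case: eqP => [->|]; rewrite ?fj0 mulr0.
Qed.

Definition dscale (a b : dual R) : dual R :=
  Dual (ds a * ds b) (ds a * dd b + dd a * ds b).

(* Inverse of an appreciable dual number. *)
Definition dinv (a : dual R) : dual R := Dual (ds a)^-1 (- dd a / ds a ^+ 2).

Lemma dscale0r a : dscale a (dzero R) = dzero R.
Proof. by rewrite /dscale /dzero /= !mulr0 addr0. Qed.

Lemma dscale0l a : dscale (dzero R) a = dzero R.
Proof. by rewrite /dscale /dzero /= !mul0r addr0. Qed.

Lemma dscale_dinv_id a : ds a != 0 -> dscale (dscale a (dinv a)) a = a.
Proof. by case: a => x y /= x_neq0; rewrite /dscale /dinv /=; congr Dual; field. Qed.

Lemma dinv_dscale_id a : ds a != 0 -> dscale (dscale (dinv a) a) (dinv a) = dinv a.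
Proof. by case: a => x y /= x_neq0; rewrite /dscale /dinv /=; congr Dual; field. Qed.

Lemma ddiag_mul m n p (a b : nat -> dual R) :
  dmul (ddiag m n a) (ddiag n p b) =
  ddiag m p (fun i => if (i < n)%N then dscale (a i) (b i) else dzero R).
Proof.
rewrite !ddiagE /dmul /= !rdiag_mul rdiag_add.
by congr DMx; apply: rdiag_eq => i _; case: (i < n)%N; rewrite //= addr0.
Qed.

Lemma ddiag_mulA m n p q (a b : nat -> dual R) (Z : dmx R p q) :
  dmul (ddiag m n a) (dmul (ddiag n p b) Z) =
  dmul (ddiag m p (fun i => if (i < n)%N then dscale (a i) (b i) else dzero R)) Z.
Proof. by rewrite -dmulA ddiag_mul. Qed.

Lemma ddiag_tr m n (a : nat -> dual R) : dtr (ddiag m n a) = ddiag n m a.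
Proof. by rewrite !ddiagE /dtr /= !rdiag_tr. Qed.

Lemma ddiag_eq m n (f g : nat -> dual R) :
  (forall i, (i < minn m n)%N -> f i = g i) -> ddiag m n f = ddiag m n g.
Proof.
by move=> efg; rewrite !ddiagE; congr DMx; apply: rdiag_eq => i /efg /= ->.
Qed.

(* A diagonal entry that is infinitesimal but nonzero obstructs regularity:
   D Z D = D has no solution, since the eps-part of entry (k,k) of D Z D
   is ds(mu k) * ... + ... * ds(mu k) = 0, whereas dd(mu k) <> 0. *)
Lemma ddiag_infinitesimal_not_regular m n (mu : nat -> dual R) (k : nat)
    (Z : dmx R n m) :
  (k < minn m n)%N -> ds (mu k) = 0 -> dd (mu k) != 0 ->
  dmul (dmul (ddiag m n mu) Z) (ddiag m n mu) <> ddiag m n mu.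
Proof.
rewrite leq_min => /andP[km kn] s0 d_neq0.
move/(congr1 (fun M => mxd M (Ordinal km) (Ordinal kn))).
rewrite ddiagE /dmul /= mxE -mulmxA rdiag_mul_row0 // rdiag_mul_col0 //.
by rewrite add0r mxE eqxx => ed; rewrite -ed eqxx in d_neq0.
Qed.

End DiagonalMatrices.

Section PenroseEquations.
Variables (R : realType) (m n : nat) (A Ae : dmx R m n).

Lemma GMPI_is_DMPGI X : is_GMPI A Ae X -> is_DMPGI Ae X.
Proof.
case=> AXA XAX sym_AX sym_XA.
have XAX' : dmul X (dmul A X) = X by rewrite -dmulA.
have XAXZ p (Z : dmx R m p) : dmul X (dmul A (dmul X Z)) = dmul X Z.
  by rewrite -(dmulA A) -dmulA XAX'.
split; rewrite -AXA !dmulA.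
- by rewrite !XAXZ.
- by rewrite XAXZ XAX'.
- by rewrite XAX'.
- by rewrite XAXZ.
Qed.

(* If A and A_e agree against A_e^T on both sides, every DMPGI X of A_e
   satisfies A X = A_e X and X A = X A_e (X has the row space of A_e^T and
   the column space of A_e^T), hence is a GMPI of A. *)
Lemma DMPGI_is_GMPI X :
  dmul A (dtr Ae) = dmul Ae (dtr Ae) -> dmul (dtr Ae) A = dmul (dtr Ae) Ae ->
  is_DMPGI Ae X -> is_GMPI A Ae X.
Proof.
move=> AAet AetA [AXA XAX sym_AX sym_XA].
have X_left : X = dmul (dtr Ae) (dmul (dtr X) X).
  by rewrite -{1}XAX -sym_XA dtr_mul dmulA.
have X_right : X = dmul (dmul X (dtr X)) (dtr Ae).
  by rewrite -{1}XAX dmulA -sym_AX dtr_mul -dmulA.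
have AX_eq : dmul A X = dmul Ae X by rewrite X_left -!dmulA AAet.
have XA_eq : dmul X A = dmul X Ae by rewrite X_right !dmulA AetA.
split.
- by rewrite AX_eq dmulA XA_eq -dmulA AXA.
- by rewrite XA_eq XAX.
- by rewrite AX_eq sym_AX.
- by rewrite XA_eq sym_XA.
Qed.

End PenroseEquations.

Section EssentialPart.
Variables (R : realType) (m n : nat) (A : dmx R m n).
Variables (U : dmx R m m) (mu : nat -> dual R) (r t : nat) (V : dmx R n n).
Hypothesis svdA : is_dsvd A U mu r t V.

Let Ae := ess_part U mu r V.

(* The cross identities A A_e^T = A_e A_e^T and A_e^T A = A_e^T A_e: in the
   singular basis they reduce to Sigma Sigma_e = Sigma_e Sigma_e. *)
Lemma ess_part_cross_right : dmul A (dtr Ae) = dmul Ae (dtr Ae).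
Proof.
have [_ HV _ _ ->] := svdA.
rewrite /Ae /ess_part !dtr_mul !dtrK !dmulA !(orthKl _ HV) !ddiag_tr !ddiag_mulA.
congr dmul; congr dmul; apply: ddiag_eq => i _.
by case: (i < n)%N; case: (i < r)%N; rewrite ?dscale0r.
Qed.

Lemma ess_part_cross_left : dmul (dtr Ae) A = dmul (dtr Ae) Ae.
Proof.
have [HU _ _ _ ->] := svdA.
rewrite /Ae /ess_part !dtr_mul !dtrK !dmulA !(orthKl _ HU) !ddiag_tr !ddiag_mulA.
congr dmul; congr dmul; apply: ddiag_eq => i _.
by case: (i < m)%N; case: (i < r)%N; rewrite ?dscale0l.
Qed.

Lemma ess_part_DMPGI :
  is_DMPGI Ae (dmul (dmul V (ddiag n m
     (fun i => if (i < r)%N then dinv (mu i) else dzero R))) (dtr U)).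
Proof.
have [HU HV _ [appr _ _ _] _] := svdA.
have appr_neq0 i : (i < r)%N -> ds (mu i) != 0 by move/appr/lt0r_neq0.
rewrite /Ae /ess_part; split.
- rewrite !dmulA !(orthKl _ HV) !(orthKl _ HU) !ddiag_mulA.
  congr dmul; congr dmul; apply: ddiag_eq => i.
  rewrite leq_min => /andP[-> ->].
  by case: ltnP => ir; rewrite ?dscale_dinv_id ?appr_neq0 ?dscale0r.
- rewrite !dmulA !(orthKl _ HV) !(orthKl _ HU) !ddiag_mulA.
  congr dmul; congr dmul; apply: ddiag_eq => i.
  rewrite leq_min => /andP[-> ->].
  by case: ltnP => ir; rewrite ?dinv_dscale_id ?appr_neq0 ?dscale0r.
- by rewrite !dmulA !(orthKl _ HV) !ddiag_mulA !dtr_mul dtrK ddiag_tr !dmulA.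
- by rewrite !dmulA !(orthKl _ HU) !ddiag_mulA !dtr_mul dtrK ddiag_tr !dmulA.
Qed.

Lemma ess_part_full : t = r -> A = Ae.
Proof.
have [_ _ _ [_ _ zero _] ->] := svdA => tr.
rewrite /Ae /ess_part; congr dmul; congr dmul; apply: ddiag_eq => i i_lt.
by case: (ltnP i r) => // ri; rewrite zero // tr.
Qed.

(* With an infinitesimal singular value mu_r, A is not even {1}-invertible:
   A Y A = A would give Sigma (V^T Y U) Sigma = Sigma. *)
Lemma infinitesimal_no_DMPGI : t <> r -> ~ exists Y, is_DMPGI A Y.
Proof.
have [HU HV [rt tmn] [_ infin _ _] HA] := svdA.
move=> t_neq_r [Y [AYA _ _ _]].
have lt_rt : (r < t)%N by rewrite ltn_neqAle rt andbT; apply/eqP => /esym.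
have [s0 d_gt0] := infin r (leqnn r) lt_rt.
have Sigma_eq : dmul (dtr U) (dmul A V) = ddiag m n mu.
  by rewrite HA !dmulA (orthKl _ HU) (proj1 HV) dmul1r.
apply: (ddiag_infinitesimal_not_regular (Z := dmul (dtr V) (dmul Y U))
  (leq_trans lt_rt tmn) s0 (lt0r_neq0 d_gt0)).
by rewrite -[in RHS]Sigma_eq -AYA HA !dmulA (orthKl _ HU) (proj1 HV) dmul1r.
Qed.

End EssentialPart.

Theorem theorem5p2 (R : realType) (m n : nat) (A : dmx R m n)
    (U : dmx R m m) (mu : nat -> dual R) (r t : nat) (V : dmx R n n) :
  is_dsvd A U mu r t V ->
  let Ae := ess_part U mu r V in
  (* the DMPGI of A_e exists, and A^G = A_e^D *)
  ((exists Y, is_DMPGI Ae Y) /\ (forall X, is_GMPI A Ae X <-> is_DMPGI Ae X)) /\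
  (* all nonzero singular values appreciable: A^D exists and A^D = A^G *)
  (t = r -> (exists Y, is_DMPGI A Y) /\ (forall X, is_DMPGI A X <-> is_GMPI A Ae X)) /\
  (* otherwise A^D does not exist *)
  (t <> r -> ~ (exists Y, is_DMPGI A Y)).
Proof.
move=> svdA Ae.
have GMPI_iff X : is_GMPI A Ae X <-> is_DMPGI Ae X.
  split; first exact: GMPI_is_DMPGI.
  exact: DMPGI_is_GMPI (ess_part_cross_right svdA) (ess_part_cross_left svdA).
have Ae_regular : exists Y, is_DMPGI Ae Y := ex_intro _ _ (ess_part_DMPGI svdA).
split=> //; split; last exact: infinitesimal_no_DMPGI svdA.
move=> tr; have AAe : A = Ae := ess_part_full svdA tr.
by split=> [|X]; rewrite ?GMPI_iff AAe.
Qed.
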